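(* Let $\mathcal S=(P_-^\Gamma)_{\Gamma\in F}$ be a subtraction scheme of regular type (RT). Then the convolution product of two regular characters is a regular character, and for every $n$, the convolution product of two $n$-regular characters is an $n$-regular character.
   Context: Fix a renormalisable quantum field theory. $F$ denotes the set of 1PI ultraviolet-divergent Feynman graphs, and $H$ the free commutative polynomial algebra over $\mathbb C$ generated by $F$ (product = disjoint union, unit $\mathbb 1$), graded by loop number with $H_0=\mathbb C$; $\pi_{(n)}$ is the projection onto $H_n$ and $\phi_{(n)}:=\phi\circ\pi_{(n)}$. For $\Gamma\in F$, a proper spinney $S$ is a nonempty set of pairwise disjoint proper 1PI UV-divergent subgraphs of $\Gamma$; $W(\Gamma)$ is the set of proper spinneys and $\Gamma/S\in F$ is $\Gamma$ with the elements of $S$ contracted to points. $H$ is a graded connected commutative Hopf algebra with $\Delta(\Gamma)=\Gamma\otimes\mathbb 1+\mathbb 1\otimes\Gamma+\sum_{S\in W(\Gamma)}\prod_{\gamma\in S}\gamma\otimes\Gamma/S$. For each $\Gamma\in F$, $A_\Gamma$ is a commutative unital algebra of regularised amplitudes (functions of the external momenta of $\Gamma$), with integration maps over internal momenta $A_{\gamma_1}\otimes\cdots\otimes A_{\gamma_n}\otimes A_{\Gamma/S}\to A_\Gamma$ for $S=\{\gamma_1,\dots,\gamma_n\}\in W(\Gamma)$, used implicitly to interpret products such as $(\prod_{\gamma\in S}x_\gamma)x_{\Gamma/S}$ as elements of $A_\Gamma$. $F$-adapted linear forms are families of linear maps $\mathbb C\cdot\Gamma_1\cdots\Gamma_n\to(A_{\Gamma_1}\otimes\cdots\otimes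 A_{\Gamma_n})_{S_n}$, with convolution $(\phi\ast\psi)(h)=\phi(h^{(1)})\psi(h^{(2)})$. Characters are multiplicative unital $F$-adapted forms; they form a group $G$ under $\ast$. A subtraction scheme is a family of linear projectors $P_-^\Gamma$ on $A_\Gamma$; $P_+^\Gamma:=\mathrm{id}-P_-^\Gamma$. It is of regular type (RT) if for all $\Gamma\in F$, $S\in W(\Gamma)$, $x_\Gamma\in A_\Gamma$, $x_\gamma\in A_\gamma$: $P_+^\Gamma\big((\prod_{\gamma\in S}P_+^\gamma(x_\gamma))P_+^{\Gamma/S}(x_\Gamma)\big)=(\prod_{\gamma\in S}P_+^\gamma(x_\gamma))P_+^{\Gamma/S}(x_\Gamma)$. The operator $\mathcal P_+$ on $G$ is $\mathcal P_+(\phi)(\Gamma_1\cdots\Gamma_k):=P_+^{\Gamma_1}(\phi(\Gamma_1))\cdots P_+^{\Gamma_k}(\phi(\Gamma_k))$, $\mathcal P_+(\phi)(\mathbb 1)=1$. A character $\varphi$ is $n$-regular if $\mathcal P_+(\varphi)\circ\pi_{(l)}=\varphi_{(l)}$ for all $l\le n$, and regular if it is $n$-regular for all $n$. *)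

From HB Require Import structures.
From mathcomp Require Import all_boot all_algebra.
From mathcomp Require Import complex.
From mathcomp Require Import Rstruct.
From Stdlib Require Import Reals.

Set Implicit Arguments.
Unset Strict Implicit.
Unset Printing Implicit Defensive.
Import GRing.Theory.
Local Open Scope ring_scope.

Definition CC : fieldType := Rdefinitions.R[i].

(* A fixed renormalisable QFT:
   - [graph]      : the set F of 1PI UV-divergent Feynman graphs;
   - [loop]       : loop number (the grading; generators have loop >= 1,
                    since H_0 = C);
   - [spinney G]  : the finite set W(G) of proper spinneys of G;
   - [sub S]      : the (finite, nonempty) index set of the elements of the
                    spinney S, [subgr g] the corresponding subgraph gamma in F;
   - [quot S]     : the contracted graph G/S in F;
   - [amp G]      : the commutative unital C-algebra A_G of regularised
                    amplitudes;
   - [integ S x y]: the integration map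
                    A_{gamma_1} (x) ... (x) A_{gamma_n} (x) A_{G/S} -> A_G,
                    evaluated on the pure tensor (x_gamma)_gamma (x) y, i.e. the
                    element written (prod_{gamma in S} x_gamma) y in the paper;
                    it is multilinear (being defined on the tensor product). *)
Record qft_setting := QftSetting {
  graph : Type;
  loop : graph -> nat;
  loop_gt0 : forall G, leq 1 (loop G);
  spinney : graph -> finType;
  sub : forall G, spinney G -> finType;
  sub_nonempty : forall G (S : spinney G), leq 1 #|sub S|;
  subgr : forall G (S : spinney G), sub S -> graph;
  quot : forall G, spinney G -> graph;
  loop_spinney : forall G (S : spinney G),
      loop G = addn (\big[addn/0%N]_(g : sub S) loop (subgr g)) (loop (quot S));
  amp : graph -> comAlgType CC;
  integ : forall G (S : spinney G),
      (forall g : sub S, amp (subgr g)) -> amp (quot S) -> amp G;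
  integ_linear_sub : forall G (S : spinney G)
      (x : forall g : sub S, amp (subgr g)) (g : sub S) (y : amp (quot S))
      (a : CC) (u v : amp (subgr g)),
      integ (@dfwith _ (fun k => amp (subgr k)) x g (a *: u + v)) y =
      a *: integ (@dfwith _ (fun k => amp (subgr k)) x g u) y
        + integ (@dfwith _ (fun k => amp (subgr k)) x g v) y;
  integ_linear_quot : forall G (S : spinney G)
      (x : forall g : sub S, amp (subgr g)) (a : CC) (u v : amp (quot S)),
      integ x (a *: u + v) = a *: integ x u + integ x v
}.

Section Defs.
Variable Q : qft_setting.

(* A character of H (multiplicative, unital F-adapted linear form) is
   uniquely determined by, and freely specified by, its values
   phi(G) in A_G on the generators G in F. *)
Definition character := forall G : graph Q, amp G.

Definition conv (phi psi : character) : character := fun G =>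
  phi G + psi G +
  \sum_(S : spinney G) integ (fun g : sub S => phi (subgr g)) (psi (quot S)).

Definition is_subtraction_scheme
  (Pm : forall G : graph Q, {linear amp G -> amp G}) : Prop :=
  forall G (x : amp G), Pm G (Pm G x) = Pm G x.

Definition Pplus (Pm : forall G : graph Q, {linear amp G -> amp G})
  (G : graph Q) (x : amp G) : amp G := x - Pm G x.

Definition regular_type
  (Pm : forall G : graph Q, {linear amp G -> amp G}) : Prop :=
  forall G (S : spinney G) (x : forall g : sub S, amp (subgr g))
         (y : amp (quot S)),
    Pplus Pm (integ (fun g => Pplus Pm (x g)) (Pplus Pm y)) =
    integ (fun g => Pplus Pm (x g)) (Pplus Pm y).

Definition n_regular (Pm : forall G : graph Q, {linear amp G -> amp G})
  (n : nat) (phi : character) : Prop :=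
  forall G : graph Q, leq (loop G) n -> Pplus Pm (phi G) = phi G.

Definition regular (Pm : forall G : graph Q, {linear amp G -> amp G})
  (phi : character) : Prop :=
  forall n, n_regular Pm n phi.

End Defs.

From mathcomp Require Import all_boot all_algebra.
From Stdlib Require Import FunctionalExtensionality.
Import GRing.Theory.
Local Open Scope ring_scope.

(* On a graph of loop number at most n, every subgraph of a spinney and the
   contracted graph also have loop number at most n, so the three terms of
   (phi * psi)(G) are P_+-fixed: the first two by n-regularity of phi and
   psi, the spinney terms by (RT) applied to the P_+-fixed arguments. *)

Section Convolution.
Variables (Q : qft_setting) (Pm : forall G : graph Q, {linear amp G -> amp G}).

Lemma PplusD (G : graph Q) (a b : amp G) : Pplus Pm (a + b) = Pplus Pm a + Pplus Pm b.
Proof. by rewrite /Pplus raddfD opprD addrACA. Qed.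

Lemma Pplus_sum (G : graph Q) (I : finType) (F : I -> amp G) :
  Pplus Pm (\sum_(i : I) F i) = \sum_(i : I) Pplus Pm (F i).
Proof. by rewrite /Pplus raddf_sum sumrB. Qed.

Lemma loop_subgr_le (G : graph Q) (S : spinney G) (g : sub S) : (loop (subgr g) <= loop G)%N.
Proof.
rewrite (loop_spinney S) (bigD1 g) //=.
by apply: leq_trans (leq_addr _ _); apply: leq_addr.
Qed.

Lemma loop_quot_le (G : graph Q) (S : spinney G) : (loop (quot S) <= loop G)%N.
Proof. by rewrite (loop_spinney S) leq_addl. Qed.

Lemma conv_n_regular n (phi psi : character Q) :
  regular_type Pm -> n_regular Pm n phi -> n_regular Pm n psi ->
  n_regular Pm n (conv phi psi).
Proof.
move=> RT reg_phi reg_psi G le_G_n.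
have le_n G' : (loop G' <= loop G)%N -> (loop G' <= n)%N.
  by move=> le_G'; apply: leq_trans le_G_n.
rewrite /conv !PplusD reg_phi // reg_psi // Pplus_sum; congr (_ + _).
apply: eq_bigr => S _.
have fix_sub : (fun g : sub S => Pplus Pm (phi (subgr g))) = fun g => phi (subgr g).
  by apply: functional_extensionality_dep => g; rewrite reg_phi ?le_n ?loop_subgr_le.
have fix_quot : Pplus Pm (psi (quot S)) = psi (quot S).
  by rewrite reg_psi ?le_n ?loop_quot_le.
by have := RT G S (fun g => phi (subgr g)) (psi (quot S)); rewrite fix_sub fix_quot.
Qed.

Lemma conv_regular (phi psi : character Q) :
  regular_type Pm -> regular Pm phi -> regular Pm psi -> regular Pm (conv phi psi).
Proof. by move=> RT reg_phi reg_psi n; apply: conv_n_regular. Qed.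

End Convolution.

Theorem corollary4p4 (Q : qft_setting)
  (Pm : forall G : graph Q, {linear amp G -> amp G}) :
  is_subtraction_scheme Pm -> regular_type Pm ->
  (forall phi psi : character Q,
      regular Pm phi -> regular Pm psi -> regular Pm (conv phi psi)) /\
  (forall (n : nat) (phi psi : character Q),
      n_regular Pm n phi -> n_regular Pm n psi ->
      n_regular Pm n (conv phi psi)).
Proof.
move=> _ RT; split=> [phi psi | n phi psi].
- exact: conv_regular.
- exact: conv_n_regular.
Qed.
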